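(* The set $\mathcal{L}_{ME}=\{(M,q)\mid ME[U](M)>q\}$ is an observable hyperproperty. That is, for every rational $q$, the set of programs $\{M\mid ME[U](M)>q\}$ is an observable hyperproperty.
   Context: Stores map variables to values; $H$ is the high input variable and $O$ the low output variable. A trace is a sequence of stores. For a finite trace $t$, $t\circ t'$ is concatenation. A program is a set $M$ of infinite traces that is deterministic (two traces with the same initial value of $H$ are equal) and has a finite nonempty input domain $\mathbb{H}_M=\{\sigma_0(H)\}$. Input domains are unbounded in size. $M(h)$ is the output trace $(\sigma_1(O),\sigma_2(O),\dots)$ of the trace of $M$ starting with $H=h$. $\bot$ denotes termination. $M(h)=o$ means that for all $i$, $o_i=\bot$ or $M(h)_i=\bot$ or $M(h)_i=o_i$. For a distribution $\mu$ on $\mathbb{H}_M$, $\mu(O=o)=\sum_{h:M(h)=o}\mu(H=h)$, with conditional probabilities induced accordingly. $U$ is the uniform distribution on $\mathbb{H}_M$. Min-entropy QIF (log base 2): - $\mathcal{V}[\mu](X)=\max_x\mu(X=x)$. - $\mathcal{V}[\mu](X|Y)=\sum_y\mu(Y=y)\max_x\mu(X=x|Y=y)$. - $ME[\mu](M)=\log\frac1{\mathcal{V}[\mu](H)}-\log\frac1{\mathcal{V}[\mu](H|O)}$. $\mathit{Prop}$ is the set of programs; $\mathit{Obs}$ is the set of deterministic finite sets of finite traces. For $S\in\mathit{Obs}$ and $T\in\mathit{Prop}$, $S\le T$ iff every $t\in S$ has some $t'$ with $t\circ t'\in T$. $P\subseteq\mathit{Prop}$ is observable iff for every $S\in P$ there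 is $T\in\mathit{Obs}$ with $T\le S$ such that every $S'\in\mathit{Prop}$ with $T\le S'$ is in $P$. A set $\mathcal{P}$ of pairs (program, rational) is observable iff $\{M\mid(M,q)\in\mathcal{P}\}$ is observable for every rational $q$. *)

From Stdlib Require Import Reals List ZArith QArith Qreals.
From Stdlib Require Import ClassicalEpsilon ClassicalDescription.
Open Scope R_scope.

(** Variables: the high input H, the low output O, and any other variables. *)
Inductive var : Type := VH | VO | Vother (n : nat).

(** Values; [None] is the special value ⊥ (termination). *)
Definition val : Type := option Z.
Definition bot : val := None.

Definition store : Type := var -> val.
Definition itrace : Type := nat -> store.
Definition ftrace : Type := list store.

Definition input_dom (M : itrace -> Prop) (h : val) : Prop :=
  exists t, M t /\ t 0%nat VH = h.

Definition is_program (M : itrace -> Prop) : Prop :=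
  (forall t1 t2, M t1 -> M t2 -> t1 0%nat VH = t2 0%nat VH -> t1 = t2) /\
  (exists l : list val, l <> nil /\ forall h, In h l <-> input_dom M h).

Definition is_obs (T : ftrace -> Prop) : Prop :=
  (exists l : list ftrace, forall t, In t l <-> T t) /\
  (forall t1 t2 s1 s2 r1 r2, T t1 -> T t2 -> t1 = s1 :: r1 -> t2 = s2 :: r2 ->
     s1 VH = s2 VH -> t1 = t2).

Definition tcat (t : ftrace) (t' : itrace) : itrace :=
  fun n => if Nat.ltb n (length t) then nth n t (fun _ => bot)
           else t' (n - length t)%nat.

Definition obs_le (Sx : ftrace -> Prop) (T : itrace -> Prop) : Prop :=
  forall t, Sx t -> exists t', T (tcat t t').

Definition observable (P : (itrace -> Prop) -> Prop) : Prop :=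
  forall Sp, is_program Sp -> P Sp ->
    exists T, is_obs T /\ obs_le T Sp /\
      forall Sp', is_program Sp' -> obs_le T Sp' -> P Sp'.

Definition observable_pairs (L : (itrace -> Prop) -> Q -> Prop) : Prop :=
  forall q : Q, observable (fun M => L M q).

Definition dom_list (M : itrace -> Prop) : list val :=
  epsilon (inhabits nil)
    (fun l => NoDup l /\ forall h, In h l <-> input_dom M h).

Definition out_of (t : itrace) : nat -> val := fun i => t (S i) VO.

Definition out_list (M : itrace -> Prop) : list (nat -> val) :=
  epsilon (inhabits nil)
    (fun l => NoDup l /\ forall o, In o l <-> exists t, M t /\ o = out_of t).

(** M(h) = o (equality up to ⊥). *)
Definition out_is (M : itrace -> Prop) (h : val) (o : nat -> val) : Prop :=
  exists t, M t /\ t 0%nat VH = h /\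
    forall i, o i = bot \/ out_of t i = bot \/ out_of t i = o i.

Definition ind (P : Prop) : R := if excluded_middle_informative P then 1 else 0.
Definition sumR (l : list R) : R := fold_right Rplus 0 l.
Definition maxR (l : list R) : R := fold_right Rmax 0 l.

(** mu : distribution on H_M (given as a function val -> R). *)
Definition mu_O (M : itrace -> Prop) (mu : val -> R) (o : nat -> val) : R :=
  sumR (map (fun h => ind (out_is M h o) * mu h) (dom_list M)).
Definition mu_HO (M : itrace -> Prop) (mu : val -> R) (h : val) (o : nat -> val) : R :=
  ind (out_is M h o) * mu h.
Definition mu_H_given_O (M : itrace -> Prop) (mu : val -> R) (h : val) (o : nat -> val) : R :=
  mu_HO M mu h o / mu_O M mu o.

Definition V_H (M : itrace -> Prop) (mu : val -> R) : R :=
  maxR (map mu (dom_list M)).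
Definition V_H_O (M : itrace -> Prop) (mu : val -> R) : R :=
  sumR (map (fun o => mu_O M mu o *
                maxR (map (fun h => mu_H_given_O M mu h o) (dom_list M)))
            (out_list M)).

Definition log2 (x : R) : R := ln x / ln 2.

Definition ME (M : itrace -> Prop) (mu : val -> R) : R :=
  log2 (1 / V_H M mu) - log2 (1 / V_H_O M mu).

Definition U (M : itrace -> Prop) : val -> R :=
  fun h => ind (In h (dom_list M)) / INR (length (dom_list M)).

Definition L_ME (M : itrace -> Prop) (q : Q) : Prop :=
  is_program M /\ ME M (U M) > Q2R q.

(** Under the uniform prior the min-entropy leakage of a deterministic program
    is [log2 k], where [k] is the number of distinct output traces.  Finitely
    many distinct output traces are already told apart by a finite prefix of
    length [N]; observing the length-[N+1] prefixes of all traces of [M] then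
    forces every program extending these observations to have at least [k]
    distinct outputs, hence at least the same leakage. *)
From Pilot Require Import Defs.
From Stdlib Require Import Reals List Lra Lia.
From Stdlib Require Import Classical ClassicalEpsilon FunctionalExtensionality.
Open Scope R_scope.

Lemma exists_NoDup_same_elements {A : Type} (l : list A) :
  exists l', NoDup l' /\ forall x, In x l' <-> In x l.
Proof.
  induction l as [|a l [l' [Hnd Hin]]].
  - exists nil; split; [constructor | simpl; tauto].
  - destruct (classic (In a l')) as [Ha | Ha].
    + exists l'; split; [exact Hnd|]; intro x; simpl; rewrite <- Hin.
      split; [tauto|]; intros [<- | H]; assumption.
    + exists (a :: l'); split; [constructor; assumption|].
      intro x; simpl; rewrite Hin; tauto.
Qed.

Lemma exists_uniform_bound {A : Type} (l : list A) (P : A -> nat -> Prop) :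
  (forall x, In x l -> exists i, P x i) ->
  exists N, forall x, In x l -> exists i, (i < N)%nat /\ P x i.
Proof.
  induction l as [|a l IH]; intros H.
  - exists 0%nat; intros x [].
  - destruct (H a (or_introl eq_refl)) as [i Hi].
    destruct IH as [N HN]; [intros x Hx; apply H; right; exact Hx|].
    exists (S (Nat.max i N)); intros x [<- | Hx].
    + exists i; split; [lia | exact Hi].
    + destruct (HN x Hx) as [j [Hj Pj]]; exists j; split; [lia | exact Pj].
Qed.

Lemma NoDup_length_le_rel {A B : Type} (R : A -> B -> Prop) (l1 : list A) (l2 : list B) :
  inhabited B -> NoDup l1 ->
  (forall x, In x l1 -> exists y, In y l2 /\ R x y) ->
  (forall x x' y, In x l1 -> In x' l1 -> R x y -> R x' y -> x = x') ->
  (length l1 <= length l2)%nat.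
Proof.
  intros inhB Hnd Hex Hinj.
  set (g x := epsilon inhB (fun y => In y l2 /\ R x y)).
  assert (Hg : forall x, In x l1 -> In (g x) l2 /\ R x (g x))
    by (intros x Hx; exact (epsilon_spec inhB _ (Hex x Hx))).
  rewrite <- (length_map g); apply NoDup_incl_length.
  - apply NoDup_map_NoDup_ForallPairs; [|exact Hnd].
    intros x x' Hx Hx' E.
    apply (Hinj x x' (g x) Hx Hx' (proj2 (Hg x Hx))); rewrite E; exact (proj2 (Hg x' Hx')).
  - intros y Hy; apply in_map_iff in Hy; destruct Hy as [x [<- Hx]]; exact (proj1 (Hg x Hx)).
Qed.

Definition separating {A : Type} (N : nat) (l : list (nat -> A)) : Prop :=
  forall o1 o2, In o1 l -> In o2 l -> (forall i, (i < N)%nat -> o1 i = o2 i) -> o1 = o2.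

Lemma exists_separating {A : Type} (l : list (nat -> A)) : exists N, separating N l.
Proof.
  destruct (exists_uniform_bound (list_prod l l)
              (fun p i => fst p = snd p \/ fst p i <> snd p i)) as [N HN].
  { intros [o1 o2] _; simpl; destruct (classic (o1 = o2)) as [E | E].
    - exists 0%nat; left; exact E.
    - destruct (not_all_ex_not _ _ (fun H => E (functional_extensionality _ _ H))) as [i Hi].
      exists i; right; exact Hi. }
  exists N; intros o1 o2 H1 H2 Hagree.
  destruct (HN (o1, o2) (in_prod _ _ _ _ H1 H2)) as [i [Hi [E | Hd]]]; [exact E|].
  exfalso; exact (Hd (Hagree i Hi)).
Qed.

Lemma maxR_ge (l : list R) (x : R) : In x l -> x <= maxR l.
Proof.
  induction l as [|a l IH]; simpl; [tauto|]; intros [<- | H].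
  - apply Rmax_l.
  - eapply Rle_trans; [exact (IH H) | apply Rmax_r].
Qed.

Lemma maxR_le (l : list R) (c : R) : 0 <= c -> (forall x, In x l -> x <= c) -> maxR l <= c.
Proof.
  intros Hc; induction l as [|a l IH]; simpl; intros H; [exact Hc|].
  apply Rmax_lub; [apply H; left; reflexivity | apply IH; intros x Hx; apply H; right; exact Hx].
Qed.

Lemma maxR_eq (l : list R) (x : R) :
  In x l -> 0 <= x -> (forall y, In y l -> y <= x) -> maxR l = x.
Proof.
  intros Hx Hx0 Hle; apply Rle_antisym; [exact (maxR_le l x Hx0 Hle) | exact (maxR_ge l x Hx)].
Qed.

Lemma sumR_const {A : Type} (l : list A) (c : R) :
  sumR (map (fun _ => c) l) = INR (length l) * c.
Proof.
  induction l as [|a l IH]; [simpl; ring|].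
  unfold sumR in *; cbn [map fold_right length]; rewrite IH, S_INR; ring.
Qed.

Lemma sumR_nonneg (l : list R) : (forall y, In y l -> 0 <= y) -> 0 <= sumR l.
Proof.
  induction l as [|a l IH]; simpl; intros Hpos; [lra|].
  assert (0 <= a) by (apply Hpos; left; reflexivity).
  assert (0 <= sumR l) by (apply IH; intros y Hy; apply Hpos; right; exact Hy); lra.
Qed.

Lemma sumR_ge (l : list R) (x : R) : In x l -> (forall y, In y l -> 0 <= y) -> x <= sumR l.
Proof.
  induction l as [|a l IH]; simpl; [tauto|]; intros Hx Hpos.
  assert (Hl : 0 <= sumR l) by (apply sumR_nonneg; intros y Hy; apply Hpos; right; exact Hy).
  assert (0 <= a) by (apply Hpos; left; reflexivity).
  destruct Hx as [<- | Hx]; [lra|].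
  assert (x <= sumR l) by (apply IH; [exact Hx | intros y Hy; apply Hpos; right; exact Hy]); lra.
Qed.

Lemma ind_true (P : Prop) : P -> Defs.ind P = 1.
Proof.
  intro H; unfold Defs.ind; destruct (ClassicalDescription.excluded_middle_informative P); tauto.
Qed.

Lemma ind_0_or_1 (P : Prop) : Defs.ind P = 0 \/ Defs.ind P = 1.
Proof. unfold Defs.ind; destruct (ClassicalDescription.excluded_middle_informative P); auto. Qed.

Lemma log2_le (x y : R) : 0 < x -> x <= y -> log2 x <= log2 y.
Proof.
  intros Hx Hxy; unfold log2, Rdiv; apply Rmult_le_compat_r.
  - left; apply Rinv_0_lt_compat; rewrite <- ln_1; apply ln_increasing; lra.
  - destruct Hxy as [H | ->]; [left; apply ln_increasing; assumption | right; reflexivity].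
Qed.

Lemma traces_for_inputs (M : itrace -> Prop) (l : list val) :
  (forall h, In h l -> input_dom M h) ->
  exists lt, (forall t, In t lt -> M t) /\
    forall h, In h l -> exists t, In t lt /\ t 0%nat VH = h.
Proof.
  induction l as [|a l IH]; intros H.
  - exists nil; split; [intros t [] | intros h []].
  - destruct (H a (or_introl eq_refl)) as [t [Mt Ht]].
    destruct IH as [lt [H1 H2]]; [intros h Hh; apply H; right; exact Hh|].
    exists (t :: lt); split.
    + intros t' [<- | Ht']; [exact Mt | exact (H1 t' Ht')].
    + intros h [<- | Hh]; [exists t; split; [left; reflexivity | exact Ht]|].
      destruct (H2 h Hh) as [t' [Ht' E]]; exists t'; split; [right; exact Ht' | exact E].
Qed.

Section Program.

Variable M : itrace -> Prop.
Hypothesis HM : is_program M.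

Lemma program_traces_finite : exists lt : list itrace, forall t, M t <-> In t lt.
Proof.
  destruct HM as [Hdet [l [_ Hl]]].
  destruct (traces_for_inputs M l (fun h => proj1 (Hl h))) as [lt [H1 H2]].
  exists lt; intro t; split; [|exact (H1 t)]; intro Mt.
  destruct (H2 (t 0%nat VH) (proj2 (Hl _) (ex_intro _ t (conj Mt eq_refl)))) as [t' [Ht' E]].
  rewrite <- (Hdet t' t (H1 t' Ht') Mt E); exact Ht'.
Qed.

Lemma dom_list_spec :
  NoDup (dom_list M) /\ forall h, In h (dom_list M) <-> input_dom M h.
Proof.
  destruct HM as [_ [l [_ Hl]]]; unfold dom_list; apply epsilon_spec.
  destruct (exists_NoDup_same_elements l) as [l' [Hnd Hin]].
  exists l'; split; [exact Hnd | intro h; rewrite Hin; apply Hl].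
Qed.

Lemma out_list_spec :
  NoDup (out_list M) /\ forall o, In o (out_list M) <-> exists t, M t /\ o = out_of t.
Proof.
  destruct program_traces_finite as [lt Hlt]; unfold out_list; apply epsilon_spec.
  destruct (exists_NoDup_same_elements (map out_of lt)) as [l' [Hnd Hin]].
  exists l'; split; [exact Hnd|]; intro o; rewrite Hin, in_map_iff.
  split; intros [t [E Ht]]; exists t; split.
  - apply Hlt; exact Ht.
  - symmetry; exact E.
  - symmetry; exact Ht.
  - apply Hlt; exact E.
Qed.

Lemma exists_trace : exists t, M t.
Proof.
  destruct HM as [_ [[|h l] [Hne Hl]]]; [congruence|].
  destruct (proj1 (Hl h) (or_introl eq_refl)) as [t [Mt _]]; exists t; exact Mt.
Qed.

Lemma out_list_length_pos : (0 < length (out_list M))%nat.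
Proof.
  destruct exists_trace as [t Mt].
  assert (Ho : In (out_of t) (out_list M)) by (apply out_list_spec; exists t; auto).
  destruct (out_list M); [contradiction | simpl; lia].
Qed.

Let n := INR (length (dom_list M)).

Lemma dom_size_pos : 0 < n.
Proof.
  destruct exists_trace as [t Mt].
  assert (Hh : In (t 0%nat VH) (dom_list M)) by (apply dom_list_spec; exists t; auto).
  unfold n; apply lt_0_INR; destruct (dom_list M); [contradiction | simpl; lia].
Qed.

Lemma U_in_dom (h : val) : In h (dom_list M) -> U M h = / n.
Proof. intro Hh; unfold U; rewrite ind_true by exact Hh; unfold n, Rdiv; ring. Qed.

Lemma V_H_U : V_H M (U M) = / n.
Proof.
  pose proof dom_size_pos as Hn.
  destruct exists_trace as [t Mt].
  assert (Hh : In (t 0%nat VH) (dom_list M)) by (apply dom_list_spec; exists t; auto).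
  unfold V_H; apply maxR_eq.
  - rewrite <- (U_in_dom _ Hh); apply in_map; exact Hh.
  - left; apply Rinv_0_lt_compat; exact Hn.
  - intros y Hy; apply in_map_iff in Hy; destruct Hy as [h [<- Hh']].
    rewrite (U_in_dom _ Hh'); lra.
Qed.

(* Every output [o] has probability [mu_O o >= 1/n] and posterior vulnerability
   [(1/n) / mu_O o], so its summand in [V_H_O] is [1/n] whatever the number of
   inputs compatible with [o] up to [bot]. *)
Lemma V_H_O_summand_U (o : nat -> val) :
  In o (out_list M) ->
  mu_O M (U M) o *
    maxR (map (fun h => mu_H_given_O M (U M) h o) (dom_list M)) = / n.
Proof.
  intro Ho; pose proof dom_size_pos as Hn.
  destruct (proj1 (proj2 out_list_spec o) Ho) as [t [Mt ->]].
  set (h1 := t 0%nat VH).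
  assert (Hh1 : In h1 (dom_list M)) by (apply dom_list_spec; exists t; auto).
  assert (Hout : out_is M h1 (out_of t)) by (exists t; auto).
  set (m := mu_O M (U M) (out_of t)).
  assert (Hinv : 0 < / n) by (apply Rinv_0_lt_compat; exact Hn).
  assert (Hm : / n <= m).
  { unfold m, mu_O; apply sumR_ge.
    - replace (/ n) with (Defs.ind (out_is M h1 (out_of t)) * U M h1)
        by (rewrite ind_true by exact Hout; rewrite U_in_dom by exact Hh1; ring).
      apply (in_map (fun h => Defs.ind (out_is M h (out_of t)) * U M h)); exact Hh1.
    - intros y Hy; apply in_map_iff in Hy; destruct Hy as [h [<- Hh]].
      rewrite U_in_dom by exact Hh.
      destruct (ind_0_or_1 (out_is M h (out_of t))) as [-> | ->]; lra. }
  assert (Hmax : maxR (map (fun h => mu_H_given_O M (U M) h (out_of t)) (dom_list M))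
                 = / n / m).
  { unfold mu_H_given_O, mu_HO; fold m; apply maxR_eq.
    - replace (/ n / m) with (Defs.ind (out_is M h1 (out_of t)) * U M h1 / m)
        by (rewrite ind_true by exact Hout; rewrite U_in_dom by exact Hh1; field; lra).
      apply (in_map (fun h => Defs.ind (out_is M h (out_of t)) * U M h / m)); exact Hh1.
    - unfold Rdiv; apply Rmult_le_pos; [lra | left; apply Rinv_0_lt_compat; lra].
    - intros y Hy; apply in_map_iff in Hy; destruct Hy as [h [<- Hh]].
      rewrite U_in_dom by exact Hh.
      destruct (ind_0_or_1 (out_is M h (out_of t))) as [-> | ->]; [|rewrite Rmult_1_l; lra].
      unfold Rdiv; rewrite !Rmult_0_l.
      apply Rmult_le_pos; [lra | left; apply Rinv_0_lt_compat; lra]. }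
  rewrite Hmax; field; lra.
Qed.

Lemma V_H_O_U : V_H_O M (U M) = INR (length (out_list M)) * / n.
Proof.
  unfold V_H_O; rewrite <- sumR_const; f_equal.
  apply map_ext_in; exact V_H_O_summand_U.
Qed.

Lemma ME_U_log2_outputs : ME M (U M) = log2 (INR (length (out_list M))).
Proof.
  pose proof dom_size_pos as Hn.
  assert (Hk : 0 < INR (length (out_list M))) by (apply lt_0_INR, out_list_length_pos).
  unfold ME, log2; rewrite V_H_U, V_H_O_U.
  replace (1 / / n) with n by (field; lra).
  replace (1 / (INR (length (out_list M)) * / n)) with (n * / INR (length (out_list M)))
    by (field; lra).
  assert (Hln2 : 0 < ln 2) by (rewrite <- ln_1; apply ln_increasing; lra).
  rewrite ln_mult, ln_Rinv; [field; lra | exact Hk | exact Hn |].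
  apply Rinv_0_lt_compat; exact Hk.
Qed.

End Program.

Definition prefix (t : itrace) (L : nat) : ftrace := map t (seq 0 L).

Lemma tcat_prefix_lt (t t' : itrace) (L n : nat) :
  (n < L)%nat -> tcat (prefix t L) t' n = t n.
Proof.
  intro Hn; unfold tcat, prefix; rewrite length_map, length_seq.
  destruct (Nat.ltb_spec n L) as [_ | Hge]; [|lia].
  rewrite nth_indep with (d' := t 0%nat) by (rewrite length_map, length_seq; exact Hn).
  rewrite map_nth, seq_nth by exact Hn; reflexivity.
Qed.

Lemma tcat_prefix_shift (t : itrace) (L : nat) : tcat (prefix t L) (fun n => t (n + L)%nat) = t.
Proof.
  apply functional_extensionality; intro n.
  destruct (Nat.lt_ge_cases n L) as [Hn | Hn]; [exact (tcat_prefix_lt _ _ _ _ Hn)|].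
  unfold tcat, prefix; rewrite length_map, length_seq.
  destruct (Nat.ltb_spec n L); [lia | f_equal; lia].
Qed.

Definition prefix_obs (M : itrace -> Prop) (L : nat) : ftrace -> Prop :=
  fun p => exists t, M t /\ p = prefix t L.

Lemma prefix_obs_is_obs (M : itrace -> Prop) (L : nat) :
  is_program M -> is_obs (prefix_obs M (S L)).
Proof.
  intro HM; destruct (program_traces_finite M HM) as [lt Hlt]; split.
  - exists (map (fun t => prefix t (S L)) lt); intro p; rewrite in_map_iff.
    split; intros [t [E Ht]]; exists t; split.
    + apply Hlt; exact Ht.
    + symmetry; exact E.
    + symmetry; exact Ht.
    + apply Hlt; exact E.
  - intros p1 p2 s1 s2 r1 r2 [t1 [Ht1 ->]] [t2 [Ht2 ->]] E1 E2 Hs.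
    injection E1 as <- _; injection E2 as <- _.
    rewrite (proj1 HM t1 t2 Ht1 Ht2 Hs); reflexivity.
Qed.

Lemma prefix_obs_le (M : itrace -> Prop) (L : nat) : obs_le (prefix_obs M L) M.
Proof.
  intros p [t [Ht ->]]; exists (fun n => t (n + L)%nat).
  rewrite tcat_prefix_shift; exact Ht.
Qed.

Lemma obs_le_prefix_obs_agree (M M' : itrace -> Prop) (L : nat) (t : itrace) :
  obs_le (prefix_obs M L) M' -> M t ->
  exists t', M' t' /\ forall n, (n < L)%nat -> t' n = t n.
Proof.
  intros Hle Ht; destruct (Hle (prefix t L) (ex_intro _ t (conj Ht eq_refl))) as [t' Ht'].
  exists (tcat (prefix t L) t'); split; [exact Ht'|].
  intros n Hn; exact (tcat_prefix_lt _ _ _ _ Hn).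
Qed.

(* Matching each output of [M] with an output of [M'] that agrees with it
   before time [N] is injective, because such prefixes already separate the
   outputs of [M]. *)
Lemma out_list_length_le (M M' : itrace -> Prop) (N : nat) :
  is_program M -> is_program M' -> separating N (out_list M) ->
  obs_le (prefix_obs M (S N)) M' ->
  (length (out_list M) <= length (out_list M'))%nat.
Proof.
  intros HM HM' Hsep Hle.
  destruct (out_list_spec M HM) as [Hnd Hout]; destruct (out_list_spec M' HM') as [_ Hout'].
  apply (NoDup_length_le_rel (fun o o' => forall i, (i < N)%nat -> o i = o' i));
    [exact (inhabits (fun _ => bot)) | exact Hnd | |].
  - intros o Ho; destruct (proj1 (Hout o) Ho) as [t [Ht ->]].
    destruct (obs_le_prefix_obs_agree M M' (S N) t Hle Ht) as [t' [Ht' Hagree]].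
    exists (out_of t'); split; [apply Hout'; exists t'; auto|].
    intros i Hi; unfold out_of; rewrite (Hagree (S i)) by lia; reflexivity.
  - intros o1 o2 o' H1 H2 A1 A2; apply Hsep; [exact H1 | exact H2 |].
    intros i Hi; rewrite (A1 i Hi), (A2 i Hi); reflexivity.
Qed.

Theorem theorem5 : observable_pairs L_ME.
Proof.
  intros q M HM [_ Hleak].
  destruct (exists_separating (out_list M)) as [N Hsep].
  exists (prefix_obs M (S N)); split; [exact (prefix_obs_is_obs M N HM)|].
  split; [exact (prefix_obs_le M (S N))|].
  intros M' HM' Hle; split; [exact HM'|].
  rewrite ME_U_log2_outputs in Hleak by exact HM.
  rewrite ME_U_log2_outputs by exact HM'.
  eapply Rlt_le_trans; [exact Hleak|]; apply log2_le.
  - apply lt_0_INR, out_list_length_pos, HM.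
  - apply le_INR, (out_list_length_le M M' N HM HM' Hsep Hle).
Qed.
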